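(* Let $x$ be an element of a commutative ring $R$. The morphism of $R$-complexes $f:\mathcal{L}_x\to\check{C}_x$ given in degree $0$ by $f_0:R[U]\to R$, $r(U)\mapsto r(0)$, and in degree $1$ by $f_1:UR[U]\to R_x$, $r(U)\mapsto r(1/x)$, is a quasi-isomorphism.
   Context: $\mathcal{L}_x$ denotes the $R$-complex $0\to R[U]\xrightarrow{\psi} UR[U]\to 0$ with $R[U]$ in cohomological degree $0$, $UR[U]$ (polynomials without constant term) in degree $1$, and $\psi(r(U))=r(0)-(1-xU)r(U)$. $\check{C}_x$ denotes the complex $0\to R\xrightarrow{\iota_x} R_x\to 0$ in degrees $0,1$, with $\iota_x(r)=r/1$. *)

From HB Require Import structures.
From mathcomp Require Import all_boot all_order all_algebra.
Set Implicit Arguments. Unset Strict Implicit. Unset Printing Implicit Defensive.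
Import Order.TTheory GRing.Theory Num.Theory.
Local Open Scope ring_scope.

Definition is_localization_at (R : comNzRingType) (S : comPzRingType)
    (lam : {rmorphism R -> S}) (x : R) : Prop :=
  [/\ exists v : S, lam x * v = 1,
      forall s : S, exists (a : R) (n : nat), s * lam x ^+ n = lam a
    & forall a b : R, lam a = lam b -> exists k : nat, x ^+ k * a = x ^+ k * b].

(* The degree-1 term UR[U] of L_x: polynomials with zero constant term. *)
Definition UR (R : comNzRingType) : pred {poly R} := fun p => p`_0 == 0.

Definition Lx_psi (R : comNzRingType) (x : R) (r : {poly R}) : {poly R} :=
  r.[0]%:P - (1 - x%:P * 'X) * r.

Definition f0 (R : comNzRingType) (r : {poly R}) : R := r.[0].

(* f_1 : UR[U] -> R_x, r(U) |-> r(1/x), where u is the inverse of x in R_x. *)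
Definition f1 (R : comNzRingType) (S : comPzRingType)
    (lam : {rmorphism R -> S}) (u : S) (r : {poly R}) : S :=
  \sum_(i < size r) lam r`_i * u ^+ i.

(* Quasi-isomorphism between two-term complexes A0 --dA--> A1 and
   B0 --dB--> B1 (degrees 0,1), A1 given as a subgroup A1m of a zmodType:
   (f0,f1) is a morphism of complexes (dA lands in A1m, f1 o dA = dB o f0),
   and the induced maps on H^0 = ker d and H^1 = coker d are bijective. *)
Definition quasi_iso2 (A0 A1 B0 B1 : zmodType) (A1m : pred A1)
    (dA : A0 -> A1) (dB : B0 -> B1) (g0 : A0 -> B0) (g1 : A1 -> B1) : Prop :=
  [/\
      (forall a, A1m (dA a)) /\ (forall a, g1 (dA a) = dB (g0 a)),
      (* H^0 injective *)
      (forall a, dA a = 0 -> g0 a = 0 -> a = 0),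
      (* H^0 surjective *)
      (forall b, dB b = 0 -> exists a, dA a = 0 /\ g0 a = b),
      (* H^1 injective *)
      (forall p, A1m p -> (exists b, g1 p = dB b) -> exists a, p = dA a)
    & (* H^1 surjective *)
      (forall c, exists p b, A1m p /\ c = g1 p + dB b)].

(* Modulo the image of multiplication by [1 - xU], the variable [U] becomes an
   inverse of [x], so [f_1] identifies the cokernel of [psi] with [R_x / R]:
   a polynomial [q] dies under [r(U) |-> r(1/x)] exactly when its reversal
   [sum_i q_i x^(n-i)] is [x]-torsion, and then [q] is a multiple of [1 - xU]
   because [U^i = x^(N-i) U^N] modulo [1 - xU].  In degree 0, [1 - xU] is a
   non-zero-divisor whose multiples [b (1 - (xU)^k)] realise the [x]-torsion
   elements [b] of [R], which form the kernel of [R -> R_x]. *)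

From HB Require Import structures.
From mathcomp Require Import all_boot all_order all_algebra.
Set Implicit Arguments.
Unset Strict Implicit.
Unset Printing Implicit Defensive.
Import GRing.Theory.
Local Open Scope ring_scope.

Section PolyKoszul.

Variables (R : comNzRingType) (x : R).

Local Notation xU := (x%:P * 'X).

Lemma horner0_mul_1subxX (a : {poly R}) : ((1 - xU) * a).[0] = a.[0].
Proof. by rewrite hornerM !hornerE subr0 mul1r. Qed.

Lemma coef0_mul_1subxX (a : {poly R}) : ((1 - xU) * a)`_0 = a`_0.
Proof. by rewrite -!horner_coef0 horner0_mul_1subxX. Qed.

Lemma coefS_mul_1subxX (a : {poly R}) n :
  ((1 - xU) * a)`_n.+1 = a`_n.+1 - x * a`_n.
Proof. by rewrite mulrBl mul1r coefB -mulrA coefCM coefXM. Qed.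

Lemma mul_1subxX_eq0 (a : {poly R}) : (1 - xU) * a = 0 -> a = 0.
Proof.
move=> wa0; apply/polyP; elim=> [|n IHn]; rewrite coef0.
  by rewrite -coef0_mul_1subxX wa0 coef0.
by move: (coefS_mul_1subxX a n); rewrite wa0 coef0 IHn coef0 mulr0 subr0.
Qed.

Lemma Lx_psi_UR (a : {poly R}) : UR (Lx_psi x a).
Proof. by rewrite /UR /Lx_psi coefB coefC coef0_mul_1subxX horner_coef0 subrr. Qed.

Lemma Lx_psi_f0_eq0 (a : {poly R}) : Lx_psi x a = 0 -> f0 a = 0 -> a = 0.
Proof.
rewrite /Lx_psi /f0 => psi0 a0; apply: mul_1subxX_eq0.
by apply/eqP; rewrite -oppr_eq0 -psi0 a0 sub0r.
Qed.

Lemma subr1_xXn (m : nat) : 1 - xU ^+ m = (1 - xU) * \sum_(i < m) xU ^+ i.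
Proof. by rewrite -opprB subrX1 -mulNr opprB. Qed.

Lemma expr_xX (m : nat) : xU ^+ m = x ^+ m *: 'X^m.
Proof. by rewrite exprMn -polyC_exp mul_polyC. Qed.

Lemma mul_1subxX_torsion (b : R) (k : nat) :
  x ^+ k * b = 0 -> (1 - xU) * (b *: \sum_(i < k) xU ^+ i) = b%:P.
Proof.
move=> xkb0; rewrite -scalerAr -subr1_xXn scalerBr expr_xX scalerA mulrC xkb0.
by rewrite scale0r subr0 alg_polyC.
Qed.

(* Modulo [1 - xU] one has [U^i = x^(N-i) U^N]; summing these congruences
   against the coefficients of [q] gives an explicit quotient. *)
Lemma mul_1subxX_reversal (q : {poly R}) (N : nat) : (size q <= N)%N ->
  (1 - xU) * \sum_(i < size q) q`_i *: ('X^i * \sum_(j < N - i) xU ^+ j)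
  = q - (\sum_(i < size q) q`_i * x ^+ (N - i)) *: 'X^N.
Proof.
move=> qN; rewrite -[X in _ = X - _]coefK poly_def mulr_sumr scaler_suml -sumrB.
apply: eq_bigr => i _; rewrite -scalerAr mulrCA -subr1_xXn mulrBr mulr1 expr_xX.
rewrite -scalerAr -exprD subnKC ?scalerBr ?scalerA //.
by apply: leq_trans qN; apply: ltnW.
Qed.

Lemma reversal_torsion_dvd (q : {poly R}) (k : nat) :
  x ^+ k * (\sum_(i < size q) q`_i * x ^+ (size q - i)) = 0 ->
  exists A, q = (1 - xU) * A.
Proof.
move=> rev0; have := mul_1subxX_reversal (leq_addl k (size q)).
suff -> : \sum_(i < size q) q`_i * x ^+ (k + size q - i) = 0.
  by rewrite scale0r subr0 => qE; eexists; exact/esym/qE.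
rewrite -[RHS]rev0 mulr_sumr; apply: eq_bigr => i _.
by rewrite -addnBA 1?ltnW // exprD mulrCA.
Qed.

End PolyKoszul.

Section EvalAtInverse.

Variables (R : comNzRingType) (S : comPzRingType) (lam : {rmorphism R -> S}).
Variable u : S.

Local Notation f1 := (f1 lam u).

Lemma f1_wide (p : {poly R}) (n : nat) : (size p <= n)%N ->
  f1 p = \sum_(i < n) lam p`_i * u ^+ i.
Proof.
move=> pn; rewrite /f1 (big_ord_widen n (fun i => lam p`_i * u ^+ i) pn).
rewrite big_mkcond /=; apply: eq_bigr => i _; case: ltnP => // pi.
by rewrite nth_default // rmorph0 mul0r.
Qed.

Lemma f1B (p q : {poly R}) : f1 (p - q) = f1 p - f1 q.
Proof.
have [pn qn] := (leq_maxl (size p) (size q), leq_maxr (size p) (size q)).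
have pqn := size_polyD p (- q); rewrite size_polyN in pqn.
rewrite (f1_wide pqn) (f1_wide pn) (f1_wide qn) -sumrB.
by apply: eq_bigr => i _; rewrite coefB rmorphB mulrBl.
Qed.

Lemma f1Z (c : R) (p : {poly R}) : f1 (c *: p) = lam c * f1 p.
Proof.
rewrite (@f1_wide _ (size p)) ?size_scale_leq // /f1 mulr_sumr.
by apply: eq_bigr => i _; rewrite coefZ rmorphM mulrA.
Qed.

Lemma f1C (c : R) : f1 c%:P = lam c.
Proof. by rewrite (@f1_wide c%:P 1) ?size_polyC_leq1 // big_ord1 coefC mulr1. Qed.

Lemma f1X (p : {poly R}) : f1 ('X * p) = u * f1 p.
Proof.
rewrite (@f1_wide _ (size p).+1); last first.
  by rewrite mulrC; case: (eqVneq p 0) => [->|p0]; rewrite ?mul0r ?size_mulX.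
rewrite big_ord_recl coefXM rmorph0 mul0r add0r /f1 mulr_sumr.
by apply: eq_bigr => i _; rewrite coefXM exprS mulrCA.
Qed.

Lemma f1Xn (m : nat) : f1 'X^m = u ^+ m.
Proof.
elim: m => [|m IHm]; first by rewrite !expr0 -polyC1 f1C rmorph1.
by rewrite exprS f1X IHm exprS.
Qed.

Variable x : R.
Hypothesis xu1 : lam x * u = 1.

Lemma f1_mul_1subxX (a : {poly R}) : f1 ((1 - x%:P * 'X) * a) = 0.
Proof.
by rewrite mulrBl mul1r f1B -mulrA mul_polyC f1Z f1X mulrA xu1 mul1r subrr.
Qed.

Lemma f1_Lx_psi (a : {poly R}) : f1 (Lx_psi x a) = lam (f0 a).
Proof. by rewrite f1B f1_mul_1subxX subr0 f1C. Qed.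

Lemma lamXn_f1 (q : {poly R}) :
  lam x ^+ size q * f1 q = lam (\sum_(i < size q) q`_i * x ^+ (size q - i)).
Proof.
rewrite mulr_sumr rmorph_sum; apply: eq_bigr => i _.
rewrite rmorphM rmorphXn -{1}(subnK (ltnW (ltn_ord i))) exprD mulrCA -mulrA.
by rewrite -exprMn xu1 expr1n mulr1 mulrC.
Qed.

Lemma f1_UR_surj : (forall s, exists a n, s * lam x ^+ n = lam a) ->
  forall c, exists p, UR p /\ c = f1 p.
Proof.
move=> lam_frac c; have [a [m cxm]] := lam_frac c.
exists ((a * x) *: 'X^(m.+1)); split; first by rewrite /UR coefZ coefXn mulr0.
rewrite f1Z f1Xn rmorphM -cxm exprS -mulrA [lam x * _]mulrA xu1 mul1r.
by rewrite -mulrA -exprMn xu1 expr1n mulr1.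
Qed.

Hypothesis lam_ker : forall a, lam a = 0 -> exists k, x ^+ k * a = 0.

Lemma f1_eq0_dvd (q : {poly R}) : f1 q = 0 ->
  exists A, q = (1 - x%:P * 'X) * A.
Proof.
move=> fq0; have [|k rev0] := @lam_ker (\sum_(i < size q) q`_i * x ^+ (size q - i)).
  by rewrite -lamXn_f1 fq0 mulr0.
exact: reversal_torsion_dvd rev0.
Qed.

Lemma Lx_psi_ker_lam (b : R) : lam b = 0 ->
  exists a, Lx_psi x a = 0 /\ f0 a = b.
Proof.
move=> /lam_ker [k xkb0]; have wa := mul_1subxX_torsion xkb0.
have a0 : f0 (b *: \sum_(i < k) (x%:P * 'X) ^+ i) = b.
  by rewrite /f0 -(horner0_mul_1subxX x) wa hornerC.
by eexists; split; last exact: a0; rewrite /Lx_psi wa -/(f0 _) a0 subrr.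
Qed.

Lemma Lx_psi_f1_lam (p : {poly R}) (b : R) : UR p -> f1 p = lam b ->
  exists a, p = Lx_psi x a.
Proof.
move=> /eqP p0 fpb; have [A pbA] : exists A, p - b%:P = (1 - x%:P * 'X) * A.
  by apply: f1_eq0_dvd; rewrite f1B f1C fpb subrr.
have A0 : A.[0] = - b.
  by rewrite -(horner0_mul_1subxX x) -pbA hornerD hornerN hornerC horner_coef0 p0 add0r.
exists (- A); rewrite /Lx_psi hornerN A0 opprK mulrN -pbA.
by rewrite opprK addrC subrK.
Qed.

End EvalAtInverse.

Theorem lemma3p5 (R : comNzRingType) (S : comPzRingType)
    (lam : {rmorphism R -> S}) (x : R) (u : S) :
  is_localization_at lam x -> lam x * u = 1 ->
  quasi_iso2 (@UR R) (Lx_psi x) lam (@f0 R) (f1 lam u).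
Proof.
move=> [_ lam_frac lam_eq] xu1.
have lam_ker a : lam a = 0 -> exists k, x ^+ k * a = 0.
  by rewrite -(rmorph0 lam) => /lam_eq [k]; rewrite mulr0; exists k.
split.
- by split=> [a|a]; [exact: Lx_psi_UR | exact: f1_Lx_psi].
- exact: Lx_psi_f0_eq0.
- exact: Lx_psi_ker_lam.
- by move=> p pUR [b fpb]; exact: Lx_psi_f1_lam fpb.
- move=> c; have [p [pUR ->]] := f1_UR_surj xu1 lam_frac c.
  by exists p, 0; rewrite rmorph0 addr0.
Qed.
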